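(* There is an absolute constant $C>0$ such that for every group $G$ (with a measurable structure), every probability measure $\mu$ on $G$, setting $\mu'=\frac12\mu+\frac12\delta_1$, and every $N>1$, $$\Big\|\frac1{2N}\sum_{k=1}^{2N}\mu'^{*k}-\frac1N\sum_{k=1}^N\mu^{*k}\Big\|\le C\frac{\log N}{\sqrt N},$$ where $\|\cdot\|$ denotes the total variation norm.
   Context: $\mu^{*k}$ denotes the $k$-fold convolution power and $\delta_1$ the Dirac mass at the identity. *)

From HB Require Import structures.
From mathcomp Require Import all_boot all_order all_algebra.
From mathcomp Require Import all_classical all_reals all_analysis.
Set Implicit Arguments. Unset Strict Implicit. Unset Printing Implicit Defensive.
Import Order.TTheory GRing.Theory Num.Theory.
Local Open Scope classical_set_scope.
Local Open Scope ring_scope.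
Local Open Scope ereal_scope.

(* k-fold convolution power of a (set-function) measure m on a group G
   with multiplication [mul] and identity [one]:
     m^{*0} = delta_one,
     m^{*(k+1)}(A) = \int m(dx) m^{*k}(x^{-1} A)   ( = (m * m^{*k})(A) ). *)
Fixpoint convpow d (G : measurableType d) (R : realType)
    (mul : G -> G -> G) (one : G) (m : set G -> \bar R) (k : nat)
    : set G -> \bar R :=
  match k with
  | 0%N => fun A => \d_one A
  | k'.+1 => fun A =>
      \int[m]_x (convpow mul one m k' [set y | A (mul x y)])
  end.

Definition lazy_meas d (G : measurableType d) (R : realType) (one : G)
    (m : set G -> \bar R) : set G -> \bar R :=
  fun A => (2^-1)%:E * m A + (2^-1)%:E * \d_one A.

Definition tvnorm d (G : measurableType d) (R : realType)
    (nu : set G -> \bar R) : \bar R :=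
  ereal_sup [set s | exists (n : nat) (A : 'I_n -> set G),
    (forall i, measurable (A i)) /\
    (forall i j, i != j -> A i `&` A j = set0) /\
    s = \sum_(i < n) `| nu (A i) |].

From HB Require Import structures.
From mathcomp Require Import all_boot all_order all_algebra.
From mathcomp Require Import all_classical all_reals all_analysis.
From mathcomp Require Import ring lra zify measurable_realfun.
Set Implicit Arguments.
Unset Strict Implicit.
Unset Printing Implicit Defensive.
Import Order.TTheory GRing.Theory Num.Theory.
Local Open Scope classical_set_scope.
Local Open Scope ring_scope.

(* Expanding mu' = (mu + delta_1) / 2 binomially gives
   mu'^{*k} = sum_j 2^-k C(k, j) mu^{*j}, so the difference of the two averages
   is sum_j a_j mu^{*j}, where a_j is the averaged binomial weight minus the
   uniform weight 1/N on {1, ..., N}.  Every mu^{*j} is a probability, hence the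
   total variation is at most sum_j |a_j|.  The a_j sum to zero, are nonnegative
   outside {1, ..., N}, and by the hockey-stick identity a_j = - F(j) / N on
   {1, ..., N}, with F the distribution function of Bin(2N + 1, 1/2).  Thus
   sum_j |a_j| <= 2/N sum_{j <= N} F(j), and summing by parts the last sum is
   at most (2N + 1) C(2N, N) / 4^(N+1) + 1/2, where C(2N, N) / 4^N <= 1 / sqrt N.
   The result is the bound 5 / (2 sqrt N), and log N >= log 2 >= 1/2 turns it
   into the claimed one. *)

Lemma sum_bin_ord k m : (k < m)%N -> (\sum_(j < m) 'C(k, j) = 2 ^ k)%N.
Proof.
move=> km; rewrite -[2%N]/(1 + 1)%N expnDn.
rewrite (big_ord_widen m (fun i => 'C(k, i) * (1 ^ (k - i) * 1 ^ i))%N km) [RHS]big_mkcond.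
apply: eq_bigr => i _; rewrite !exp1n !muln1.
by case: ltnP => // ki; rewrite bin_small.
Qed.

Lemma sum_bin_le n m : (\sum_(i < m) 'C(n, i) <= 2 ^ n)%N.
Proof.
have le_m : (m <= maxn m n.+1)%N := leq_maxl _ _.
rewrite (big_ord_widen _ _ le_m) -(@sum_bin_ord n (maxn m n.+1)) ?leq_maxr //.
by rewrite big_mkcond; apply: leq_sum => i _; case: ifP.
Qed.

Lemma central_binS N : (N.+1 * 'C(N.+1.*2, N.+1) = 2 * N.*2.+1 * 'C(N.*2, N))%N.
Proof.
have up := mul_bin_diag N.+1.*2 N; rewrite doubleS /= in up.
have down : (N.*2.+1 * 'C(N.*2, N) = N.+1 * 'C(N.*2.+1, N))%N.
  by rewrite (mul_bin_down N.*2.+1 N); congr (_ * _)%N; lia.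
by rewrite doubleS -up -mulnA down mulnA; congr (_ * _)%N; lia.
Qed.

Lemma central_bin_sqr_le N : ('C(N.*2, N) ^ 2 * N.+1 <= 16 ^ N)%N.
Proof.
elim: N => [//|N IH]; set c := 'C(N.*2, N).
rewrite -(@leq_pmul2l (N.+1 ^ 2)) ?expn_gt0 //.
have -> : (N.+1 ^ 2 * ('C(N.+1.*2, N.+1) ^ 2 * N.+2) = 4 * N.*2.+1 ^ 2 * N.+2 * c ^ 2)%N.
  by rewrite mulnA -expnMn central_binS; ring.
have cubic : (4 * N.*2.+1 ^ 2 * N.+2 <= 16 * N.+1 ^ 2 * N.+1)%N by rewrite -mul2n; nia.
apply: leq_trans (leq_mul cubic (leqnn (c ^ 2))) _.
rewrite [leqLHS](_ : _ = 16 * N.+1 ^ 2 * (c ^ 2 * N.+1))%N; last by ring.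
apply: leq_trans (leq_mul (leqnn _) IH) _.
by rewrite [(16 ^ N.+1)%N]expnS; apply: eq_leq; ring.
Qed.

Section binomial_weights.
Variable R : realFieldType.

Definition binom_half (k j : nat) : R := 'C(k, j)%:R / 2 ^+ k.

Definition binom_cdf (n j : nat) : R := \sum_(i < j.+1) binom_half n i.

Lemma pow2_neq0 k : (2 : R) ^+ k != 0.
Proof. by rewrite expf_neq0 // pnatr_eq0. Qed.

Lemma binom_half_ge0 k j : 0 <= binom_half k j.
Proof. by rewrite divr_ge0 // exprn_ge0. Qed.

Lemma binom_half_small k j : (k < j)%N -> binom_half k j = 0.
Proof. by move=> kj; rewrite /binom_half bin_small // mul0r. Qed.

Lemma binom_half0S k : binom_half k.+1 0 = 2^-1 * binom_half k 0.
Proof. by rewrite /binom_half !bin0 exprS invfM mulrCA mul1r. Qed.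

Lemma binom_halfSS k j :
  binom_half k.+1 j.+1 = 2^-1 * (binom_half k j + binom_half k j.+1).
Proof. by rewrite /binom_half binS natrD exprS; field; rewrite pow2_neq0. Qed.

Lemma sum_binom_half k m : (k < m)%N -> \sum_(j < m) binom_half k j = 1.
Proof.
move=> km; rewrite -mulr_suml -natr_sum sum_bin_ord // natrX.
by rewrite mulfV // pow2_neq0.
Qed.

Lemma binom_cdf_ge n j : (n <= j)%N -> binom_cdf n j = 1.
Proof. by move=> nj; rewrite /binom_cdf sum_binom_half. Qed.

Lemma binom_cdf_ge0 n j : 0 <= binom_cdf n j.
Proof. by apply: sumr_ge0 => i _; exact: binom_half_ge0. Qed.

Lemma sum_binom_half_widen k m (x : nat -> R) : (k < m)%N ->
  \sum_(j < k.+1) binom_half k j * x j = \sum_(j < m) binom_half k j * x j.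
Proof.
move=> km; rewrite (big_ord_widen m (fun j => binom_half k j * x j) km) big_mkcond.
apply: eq_bigr => j _; case: ltnP => // kj.
by rewrite binom_half_small // mul0r.
Qed.

Lemma sum_binom_halfS k (x : nat -> R) :
  \sum_(j < k.+2) binom_half k.+1 j * x j =
  2^-1 * \sum_(j < k.+1) binom_half k j * x j.+1
  + 2^-1 * \sum_(j < k.+1) binom_half k j * x j.
Proof.
have shifted : \sum_(j < k.+1) binom_half k j.+1 * x j.+1
    = \sum_(j < k.+1) binom_half k j * x j - binom_half k 0 * x 0.
  rewrite [in RHS]big_ord_recl addrC addKr big_ord_recr /=.
  by rewrite binom_half_small // mul0r addr0.
rewrite big_ord_recl binom_half0S.
under eq_bigr do rewrite lift0 binom_halfSS -mulrA mulrDl mulrDr.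
rewrite big_split /= -!mulr_sumr shifted; lra.
Qed.

Lemma binom_cdfS n j : binom_cdf n.+1 j = binom_cdf n j - 2^-1 * binom_half n j.
Proof.
elim: j => [|j IH]; first by rewrite /binom_cdf !big_ord1 binom_half0S; lra.
rewrite /binom_cdf big_ord_recr [in RHS]big_ord_recr /=.
by rewrite -/(binom_cdf n.+1 j) -/(binom_cdf n j) IH binom_halfSS; lra.
Qed.

Lemma sum_binom_half_lt n j : \sum_(k < n) binom_half k j = 2 - 2 * binom_cdf n j.
Proof.
elim: n => [|n IH]; first by rewrite big_ord0 binom_cdf_ge //; lra.
by rewrite big_ord_recr /= IH binom_cdfS; lra.
Qed.

Lemma sum_partial_sums (x : nat -> R) m :
  \sum_(k < m.+1) \sum_(i < k.+1) x i = \sum_(i < m.+1) (m.+1%:R - i%:R) * x i.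
Proof.
elim: m => [|m IH]; first by rewrite !big_ord1 subr0 mul1r.
have succ : m.+2%:R = m.+1%:R + 1 :> R by rewrite -addn1 natrD.
rewrite big_ord_recr /= IH [X in _ + X]big_ord_recr [RHS]big_ord_recr /=.
rewrite addrA -big_split /= succ; congr (_ + _); last by lra.
by apply: eq_bigr => i _; lra.
Qed.

Lemma natr_mul_bin_down n m :
  (n.+1%:R - m%:R) * 'C(n.+1, m)%:R = n.+1%:R * 'C(n, m)%:R :> R.
Proof.
have /(congr1 (fun k => k%:R : R)) := mul_bin_down n.+1 m.
rewrite !natrM /= => ->; case: (leqP m n.+1) => [mn|nm]; first by rewrite natrB.
by rewrite bin_small // !mulr0.
Qed.

Lemma sum_center_weighted_bin n j :
  \sum_(i < j.+1) (n.+1%:R - 2 * i%:R) * 'C(n.+1, i)%:R = n.+1%:R * 'C(n, j)%:R :> R.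
Proof.
elim: j => [|j IH]; first by rewrite big_ord1 !bin0 mulr0 subr0.
have up : j.+1%:R * 'C(n.+1, j.+1)%:R = n.+1%:R * 'C(n, j)%:R :> R.
  by rewrite -!natrM -mul_bin_diag.
by rewrite big_ord_recr /= IH -(natr_mul_bin_down n j.+1) -up; ring.
Qed.

Lemma sum_binom_cdf_le N :
  \sum_(k < N.+1) binom_cdf (2 * N).+1 k
    <= (2 * N).+1%:R * 'C(2 * N, N)%:R / 2 ^+ (2 * N).+2 + 2^-1.
Proof.
set M := (2 * N).+1.
have M_eq : M%:R = 2 * N%:R + 1 :> R by rewrite /M -addn1 natrD natrM.
have bin_le : \sum_(i < N.+1) 'C(M, i)%:R <= 2 ^+ M :> R.
  by rewrite -natr_sum -natrX ler_nat sum_bin_le.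
have -> : \sum_(k < N.+1) binom_cdf M k = 2^-1 / 2 ^+ M *
    (\sum_(i < N.+1) (M%:R - 2 * i%:R) * 'C(M, i)%:R + \sum_(i < N.+1) 'C(M, i)%:R).
  rewrite /binom_cdf sum_partial_sums -big_split mulr_sumr; apply: eq_bigr => i _ /=.
  rewrite /binom_half M_eq -natr1; field; exact: pow2_neq0.
rewrite (sum_center_weighted_bin (2 * N) N) -/M exprS.
set S := \sum_(i < N.+1) _ in bin_le *; rewrite -subr_ge0.
rewrite (_ : _ - _ = 2^-1 / 2 ^+ M * (2 ^+ M - S)); last by field; exact: pow2_neq0.
by rewrite mulr_ge0 ?subr_ge0 // divr_ge0 ?exprn_ge0.
Qed.

End binomial_weights.

Section lazy_cesaro_coefficients.
Variable R : realFieldType.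

Definition lazy_coef (N j : nat) : R :=
  (2 * N)%:R^-1 * \sum_(1 <= k < (2 * N).+1) binom_half R k j.

Definition cesaro_coef (N j : nat) : R := N%:R^-1 * (0 < j <= N)%N%:R.

Lemma sum_nat1_indicator (x : nat -> R) n m : (n < m)%N ->
  \sum_(1 <= k < n.+1) x k = \sum_(j < m) (0 < j <= n)%N%:R * x j.
Proof.
move=> nm; rewrite -(big_mkord xpredT (fun j => (0 < j <= n)%N%:R * x j)).
rewrite (@big_cat_nat _ _ _ n.+1 0 m _ _ (leq0n _) nm) /=.
rewrite [X in _ = _ + X]big1_seq ?addr0; last first.
  move=> i /andP[_]; rewrite mem_index_iota => /andP[ni _].
  by rewrite (leqNgt i n) ni andbF mul0r.
rewrite [RHS]big_ltn // mul0r add0r; apply: eq_big_nat => i /andP[i0 iN].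
by rewrite i0 -ltnS iN mul1r.
Qed.

Lemma lazy_coef_ge0 N j : 0 <= lazy_coef N j.
Proof.
by rewrite mulr_ge0 ?invr_ge0 // sumr_ge0 // => k _; exact: binom_half_ge0.
Qed.

Lemma sum_lazy_coef N : (0 < N)%N -> \sum_(j < (2 * N).+1) lazy_coef N j = 1.
Proof.
move=> N0; rewrite -mulr_sumr exchange_big /=.
rewrite (eq_big_nat _ _ (F2 := fun=> 1)) => [|k /andP[_ k2N]]; last first.
  exact: sum_binom_half.
by rewrite sumr_const_nat subn1 mulVf // pnatr_eq0 muln_eq0 -lt0n N0.
Qed.

Lemma sum_cesaro_coef N : (0 < N)%N -> \sum_(j < (2 * N).+1) cesaro_coef N j = 1.
Proof.
move=> N0; rewrite -mulr_sumr.
under eq_bigr do rewrite -[_%:R]mulr1.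
rewrite -(@sum_nat1_indicator (fun=> 1)); last by lia.
by rewrite sumr_const_nat subn1 mulVf // pnatr_eq0 -lt0n.
Qed.

Lemma lazy_sub_cesaro_coef N j : (0 < j <= N)%N ->
  lazy_coef N j - cesaro_coef N j = - (binom_cdf R (2 * N).+1 j / N%:R).
Proof.
move=> /andP[j0 jN]; have N0 : N%:R != 0 :> R by rewrite pnatr_eq0 -lt0n; lia.
have lazy_sum : \sum_(1 <= k < (2 * N).+1) binom_half R k j
    = 2 - 2 * binom_cdf R (2 * N).+1 j.
  rewrite -sum_binom_half_lt -(big_mkord xpredT (fun k => binom_half R k j)).
  by rewrite [RHS]big_ltn // binom_half_small // add0r.
by rewrite /lazy_coef lazy_sum /cesaro_coef j0 jN mulr1 natrM; field.
Qed.

Lemma sum_abs_lazy_sub_cesaro_le N : (0 < N)%N ->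
  \sum_(j < (2 * N).+1) `|lazy_coef N j - cesaro_coef N j|
    <= 2 / N%:R * \sum_(k < N.+1) binom_cdf R (2 * N).+1 k.
Proof.
move=> N0; pose F := binom_cdf R (2 * N).+1.
have abs_eq j : `|lazy_coef N j - cesaro_coef N j|
    = lazy_coef N j - cesaro_coef N j + 2 * ((0 < j <= N)%N%:R * (F j / N%:R)).
  have [jN|jN] := boolP (0 < j <= N)%N.
    rewrite lazy_sub_cesaro_coef // normrN mul1r ger0_norm /F; first lra.
    by rewrite divr_ge0 ?binom_cdf_ge0.
  rewrite /cesaro_coef (negbTE jN) mulr0 subr0 mul0r mulr0 addr0.
  by rewrite ger0_norm // lazy_coef_ge0.
under eq_bigr do rewrite abs_eq.
rewrite big_split /= sumrB sum_lazy_coef // sum_cesaro_coef // subrr add0r.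
rewrite -mulr_sumr -(@sum_nat1_indicator (fun k => F k / N%:R)); last by lia.
have sum_le : \sum_(1 <= k < N.+1) F k <= \sum_(k < N.+1) F k.
  rewrite -(big_mkord xpredT F) [in leRHS]big_ltn //= lerDr.
  exact: binom_cdf_ge0.
rewrite -mulr_suml mulrCA mulrC; apply: ler_wpM2l sum_le.
by rewrite divr_ge0.
Qed.

Lemma lazy_cesaro_decomposition N (x : nat -> R) :
  (2 * N)%:R^-1 * \sum_(1 <= k < (2 * N).+1) \sum_(j < k.+1) binom_half R k j * x j
    - N%:R^-1 * \sum_(1 <= k < N.+1) x k
  = \sum_(j < (2 * N).+1) (lazy_coef N j - cesaro_coef N j) * x j.
Proof.
rewrite (eq_big_nat _ _ (F2 := fun k => \sum_(j < (2 * N).+1) binom_half R k j * x j));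
  last by move=> k /andP[_ k2N]; rewrite (@sum_binom_half_widen R _ _ x k2N).
rewrite exchange_big /= (@sum_nat1_indicator x N (2 * N).+1); last by lia.
rewrite !mulr_sumr -sumrB; apply: eq_bigr => j _.
by rewrite /lazy_coef /cesaro_coef -mulr_suml; ring.
Qed.

End lazy_cesaro_coefficients.

Lemma central_bin_mul_sqrt_le (R : rcfType) N :
  'C(2 * N, N)%:R * Num.sqrt (N%:R : R) <= 4 ^+ N.
Proof.
have := central_bin_sqr_le N; rewrite -mul2n -(ler_nat R) natrM !natrX => sqr_le.
rewrite -(@ler_pXn2r _ 2) ?nnegrE ?mulr_ge0 ?sqrtr_ge0 ?exprn_ge0 //.
rewrite exprMn sqr_sqrtr // -exprM [(N * 2)%N]mulnC exprM (_ : 4 ^+ 2 = 16 :> R); last first.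
  by rewrite expr2 -natrM.
apply: le_trans sqr_le; apply: ler_wpM2l; first exact: exprn_ge0.
by rewrite ler_nat.
Qed.

Lemma sum_abs_lazy_sub_cesaro_sqrt_le (R : rcfType) N : (0 < N)%N ->
  \sum_(j < (2 * N).+1) `|lazy_coef R N j - cesaro_coef R N j|
    <= 5 / (2 * Num.sqrt (N%:R : R)).
Proof.
move=> N0; set s := Num.sqrt (N%:R : R).
have s2 : s ^+ 2 = N%:R by rewrite sqr_sqrtr.
have s1 : 1 <= s by rewrite -sqrtr1 ler_sqrt // ler1n.
have s_neq0 : s != 0 by rewrite gt_eqF // (lt_le_trans ltr01 s1).
have y_pos : 0 < 4 ^+ N :> R by rewrite exprn_gt0.
set A : R := 'C(2 * N, N)%:R / 4 ^+ N.
have A_ge0 : 0 <= A by rewrite divr_ge0 // ltW.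
have As : A * s <= 1.
  by rewrite mulrAC ler_pdivrMr // mul1r central_bin_mul_sqrt_le.
apply: le_trans (sum_abs_lazy_sub_cesaro_le R N0) _.
apply: le_trans (ler_wpM2l _ (sum_binom_cdf_le _ N)) _; first by rewrite divr_ge0.
have -> : 2 / N%:R * ((2 * N).+1%:R * 'C(2 * N, N)%:R / 2 ^+ (2 * N).+2 + 2^-1)
    = ((2 * s ^+ 2 + 1) * A + 2) / (2 * s ^+ 2) :> R.
  have M_eq : (2 * N).+1%:R = 2 * N%:R + 1 :> R by rewrite -addn1 natrD natrM.
  have sq2 : 2 ^+ 2 = 4 :> R by rewrite expr2 -natrM.
  have pow_eq : 2 ^+ (2 * N).+2 = 4 * 4 ^+ N :> R by rewrite !exprS exprM sq2; lra.
  by rewrite M_eq pow_eq -s2 /A; field; rewrite s_neq0 gt_eqF.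
rewrite ler_pdivrMr; last by rewrite mulr_gt0 // exprn_gt0 // lt_def s_neq0 sqrtr_ge0.
rewrite (_ : 5 / (2 * s) * (2 * s ^+ 2) = 5 * s); last by field.
have A1 : A <= 1 by nra.
nra.
Qed.

Lemma sum_disjoint_indicator_le1 (R : numDomainType) (T : Type) n
    (B : 'I_n -> set T) (a : T) :
  (forall i j, i != j -> B i `&` B j = set0) ->
  \sum_(i < n) ((a \in B i)%:R : R) <= 1.
Proof.
move=> disjB; have [[i0 ai0]|notin] := pselect (exists i, a \in B i); last first.
  by rewrite big1 // => i _; case: (boolP (a \in B i)) => // ai; case: notin; exists i.
rewrite (bigD1 i0) //= ai0 big1 ?addr0 // => i ii0.
case: (boolP (a \in B i)) => // ai.
have : (B i `&` B i0) a by split; rewrite -in_setE.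
by rewrite disjB.
Qed.

Lemma sum_norm_mixture_le (R : numDomainType) n m (a : nat -> R)
    (x : 'I_n -> nat -> R) :
  (forall i j, 0 <= x i j) -> (forall j, \sum_(i < n) x i j <= 1) ->
  \sum_(i < n) `|\sum_(j < m) a j * x i j| <= \sum_(j < m) `|a j|.
Proof.
move=> x_ge0 x_le1.
apply: (@le_trans _ _ (\sum_(i < n) \sum_(j < m) `|a j| * x i j)).
  apply: ler_sum => i _; apply: le_trans (ler_norm_sum _ _ _) _.
  by apply: ler_sum => j _; rewrite normrM (ger0_norm (x_ge0 i j)).
rewrite exchange_big /=; apply: ler_sum => j _.
by rewrite -mulr_sumr -[leRHS]mulr1 ler_wpM2l.
Qed.

Lemma integral_lazy_meas (R : realType) d (G : measurableType d) (one : G)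
    (m : {measure set G -> \bar R}) (f : G -> \bar R) :
  measurable_fun setT f -> (forall x, 0 <= f x)%E ->
  (\int[lazy_meas one m]_x f x = (2^-1)%:E * \int[m]_x f x + (2^-1)%:E * f one)%E.
Proof.
move=> mf f_ge0; have half_ge0 : (0 : R) <= 2^-1 by rewrite invr_ge0.
have -> : lazy_meas one m = measure_add (mscale (NngNum half_ge0) m)
    (mscale (NngNum half_ge0) (\d_one : measure G R)).
  apply/funext => A; rewrite /lazy_meas /measure_add /msum /=.
  by rewrite big_ord_recr big_ord1.
rewrite ge0_integral_measure_add // !ge0_integral_mscale //.
by rewrite integral_dirac // diracE in_setT mul1e.
Qed.

Section convolution_powers.
Variables (R : realType) (d : measure_display) (G : measurableType d).
Variables (mul : G -> G -> G) (one : G).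
Hypothesis mulA : forall x y z, mul x (mul y z) = mul (mul x y) z.
Hypothesis mul1g : forall x, mul one x = x.
Hypothesis mulg1 : forall x, mul x one = x.
Hypothesis measurable_mul : measurable_fun setT (fun p : G * G => mul p.1 p.2).
Variable mu : probability G R.

Local Notation P := (convpow mul one (mu : set G -> \bar R)).

Lemma measurable_translate A x : measurable A -> measurable [set y | A (mul x y)].
Proof.
move=> mA; have := measurable_fun_pair2 x measurable_mul measurableT mA.
by rewrite setTI.
Qed.

Lemma convpow_ge0 k A : (0 <= P k A)%E.
Proof.
elim: k A => [A|k IH A] /=; first by rewrite diracE lee_fin ler0n.
by apply: integral_ge0 => x _; exact: IH.
Qed.

Lemma measurable_convpow_translate k A : measurable A ->
  measurable_fun setT (fun x => P k [set y | A (mul x y)]).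
Proof.
elim: k A => [|k IH] A mA /=.
  rewrite (_ : (fun x => _) = fun x => \d_x A); first exact: measurable_fun_dirac.
  apply/funext => x; rewrite !diracE; congr (_%:R%:E).
  by rewrite -[in RHS](mulg1 x).
rewrite (_ : (fun x => _) =
    fubini_F mu (fun p => P k [set y | A (mul (mul p.1 p.2) y)])).
  apply: measurable_fun_fubini_tonelli_F => [|p]; last exact: convpow_ge0.
  exact: measurableT_comp (IH A mA) measurable_mul.
apply/funext => x; apply: eq_integral => z _ /=.
by congr (P k _); apply/funext => y /=; rewrite mulA.
Qed.

Lemma convpow_disjoint_sum_le1 k n (B : 'I_n -> set G) :
  (forall i, measurable (B i)) -> (forall i j, i != j -> B i `&` B j = set0) ->
  (\sum_(i < n) P k (B i) <= 1)%E.
Proof.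
elim: k n B => [|k IH] n B mB disjB /=.
  by under eq_bigr do rewrite diracE; rewrite sumEFin lee_fin sum_disjoint_indicator_le1.
rewrite -ge0_integral_sum //; last 2 first.
- by move=> i; exact: measurable_convpow_translate (mB i).
- by move=> i x _; exact: convpow_ge0.
apply: (@le_trans _ _ (\int[mu]_x (cst 1 x))%E); last first.
  by rewrite integral_cst // mul1e -(probability_setT mu).
apply: ge0_le_integral => //.
- by move=> x _; apply: sume_ge0 => i _; exact: convpow_ge0.
- by apply: emeasurable_sum => i; exact: measurable_convpow_translate (mB i).
move=> x _; apply: IH => [i|i j ij]; first exact: measurable_translate.
apply/seteqP; split => // y [Biy Bjy].
have : (B i `&` B j) (mul x y) by split.
by rewrite disjB.
Qed.

Lemma convpow_le1 k A : measurable A -> (P k A <= 1)%E.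
Proof.
move=> mA; have := @convpow_disjoint_sum_le1 k 1 (fun=> A) (fun=> mA).
by rewrite big_ord1; apply=> i j; rewrite !ord1 eqxx.
Qed.

Definition convpowR k A : R := fine (P k A).

Lemma convpowRE k A : measurable A -> P k A = (convpowR k A)%:E.
Proof.
move=> mA; rewrite /convpowR fineK // ge0_fin_numE ?convpow_ge0 //.
by apply: le_lt_trans (convpow_le1 k mA) _; rewrite ltry.
Qed.

Lemma convpowR_ge0 k A : 0 <= convpowR k A.
Proof. exact: fine_ge0 (convpow_ge0 k A). Qed.

Lemma sum_convpowR_disjoint_le1 k n (B : 'I_n -> set G) :
  (forall i, measurable (B i)) -> (forall i j, i != j -> B i `&` B j = set0) ->
  \sum_(i < n) convpowR k (B i) <= 1.
Proof.
move=> mB disjB; rewrite -lee_fin -sumEFin.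
under eq_bigr do rewrite -convpowRE //.
exact: convpow_disjoint_sum_le1.
Qed.

Lemma convpow_lazy_binomial k A : measurable A ->
  convpow mul one (lazy_meas one mu) k A
    = (\sum_(j < k.+1) binom_half R k j * convpowR j A)%:E.
Proof.
elim: k A => [|k IH] A mA.
  by rewrite big_ord1 /binom_half bin0 expr0 divr1 mul1r -convpowRE.
have mtr x : measurable [set y | A (mul x y)] by exact: measurable_translate.
have integrand_ge0 j x : (0 <= (binom_half R k j)%:E * P j [set y | A (mul x y)])%E.
  by rewrite mule_ge0 ?convpow_ge0 // lee_fin binom_half_ge0.
have measurable_integrand j :
    measurable_fun setT (fun x => (binom_half R k j)%:E * P j [set y | A (mul x y)])%E.
  exact/measurable_funeM/measurable_convpow_translate.
rewrite [LHS]/=; transitivity (\int[lazy_meas one mu]_x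
    \sum_(j < k.+1) (binom_half R k j)%:E * P j [set y | A (mul x y)])%E.
  congr (integral _ _ _); apply/funext => x; rewrite IH // -sumEFin; apply: eq_bigr => j _.
  by rewrite EFinM -convpowRE.
rewrite integral_lazy_meas; last 2 first.
- exact: emeasurable_sum.
- by move=> x; apply: sume_ge0 => j _.
have integral_term j : (\int[mu]_x ((binom_half R k j)%:E * P j [set y | A (mul x y)])
    = (binom_half R k j * convpowR j.+1 A)%:E)%E.
  rewrite ge0_integralZl ?lee_fin ?binom_half_ge0 //; last 2 first.
  - exact: measurable_convpow_translate.
  - by move=> x _; exact: convpow_ge0.
  by rewrite [RHS]EFinM -(convpowRE j.+1 mA).
have -> : [set y | A (mul one y)] = A by apply/funext => y /=; rewrite mul1g.
rewrite ge0_integral_sum //.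
under eq_bigr do rewrite integral_term.
under [X in (_ + _ * X)%E]eq_bigr do rewrite (convpowRE _ mA) -EFinM.
by rewrite !sumEFin -!EFinM -EFinD (@sum_binom_halfS R k (fun j => convpowR j A)).
Qed.

Lemma tvnorm_lazy_cesaro_le N : (0 < N)%N ->
  (tvnorm (fun A =>
      ((2 * N)%:R^-1)%:E *
        (\sum_(1 <= k < (2 * N).+1) convpow mul one (lazy_meas one mu) k A)
      - (N%:R^-1)%:E * (\sum_(1 <= k < N.+1) convpow mul one mu k A))
    <= (5 / (2 * Num.sqrt N%:R))%:E)%E.
Proof.
move=> N0; apply: ge_ereal_sup => _ [n [A [mA [disjA ->]]]].
have diffE B : measurable B ->
    (((2 * N)%:R^-1)%:E *
        (\sum_(1 <= k < (2 * N).+1) convpow mul one (lazy_meas one mu) k B)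
      - (N%:R^-1)%:E * (\sum_(1 <= k < N.+1) P k B))%E
    = (\sum_(j < (2 * N).+1) (lazy_coef R N j - cesaro_coef R N j) * convpowR j B)%:E.
  move=> mB; rewrite -(lazy_cesaro_decomposition N (fun j => convpowR j B)).
  under eq_bigr do rewrite convpow_lazy_binomial //.
  under [X in (_ - _ * X)%E]eq_bigr do rewrite convpowRE //.
  by rewrite !sumEFin -!EFinM -EFinB.
under eq_bigr do rewrite diffE // abse_EFin.
rewrite sumEFin lee_fin.
apply: le_trans (sum_abs_lazy_sub_cesaro_sqrt_le R N0).
apply: (@sum_norm_mixture_le _ _ _ (fun j => lazy_coef R N j - cesaro_coef R N j)
  (fun i j => convpowR j (A i))) => [i j|j].
  exact: convpowR_ge0.
exact: sum_convpowR_disjoint_le1.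
Qed.

End convolution_powers.

Lemma half_le_ln_nat (R : realType) N : (1 < N)%N -> 2^-1 <= ln (N%:R : R).
Proof.
move=> N1; have ln2 : 2^-1 <= ln (2 : R).
  have := @le_ln1Dx R (- 2^-1); rewrite (_ : 1 + - 2^-1 = 2^-1 :> R); last lra.
  by rewrite lnV ?posrE // lerN2; apply; lra.
by apply: le_trans ln2 _; rewrite ler_ln ?posrE ?ltr0n // 1?ltnW // ler_nat.
Qed.

Theorem lemma5p2 (R : realType) :
  exists C : R, 0 < C /\
  forall (d : measure_display) (G : measurableType d)
    (mul : G -> G -> G) (one : G) (inv : G -> G),
    (forall x y z, mul x (mul y z) = mul (mul x y) z) ->
    (forall x, mul one x = x) -> (forall x, mul x one = x) ->
    (forall x, mul (inv x) x = one) -> (forall x, mul x (inv x) = one) ->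
    measurable_fun setT (fun p : G * G => mul p.1 p.2) ->
    forall (mu : probability G R) (N : nat), (1 < N)%N ->
    (tvnorm (fun A =>
      ((2 * N)%:R^-1)%:E *
        (\sum_(1 <= k < (2 * N).+1) convpow mul one (lazy_meas one mu) k A)
      - (N%:R^-1)%:E * (\sum_(1 <= k < N.+1) convpow mul one mu k A))
    <= (C * ln N%:R / Num.sqrt N%:R)%:E)%E.
Proof.
exists 5; split=> // d G mul one inv mulA mul1g mulg1 _ _ measurable_mul mu N N1.
apply: le_trans (tvnorm_lazy_cesaro_le mulA mul1g mulg1 measurable_mul mu (ltnW N1)) _.
rewrite lee_fin invfM mulrA ler_wpM2r ?invr_ge0 ?sqrtr_ge0 //.
by rewrite ler_wpM2l // half_le_ln_nat.
Qed.
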